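(* Let $\mu\in\frac12\mathbb Z$ and set $m=\omega^{N\mu}$ (so $m=\pm1$). Let $\chi=(a,b,m)$ be a character with $\operatorname{tr}\psi(\chi)=2m$, and note that $\psi(\chi)$ is diagonal if and only if it is diagonalizable. (i) If $\psi(\chi)$ is not diagonalizable, then $V(\chi,\mu)$ is a simple $N$-dimensional $\mathcal U_\xi$-module. (ii) If $\psi(\chi)=mI_2$ and $2\mu\equiv -1\pmod N$, then $V(\chi,\mu)$ is a simple projective $N$-dimensional $\mathcal U_\xi$-module; in particular this holds for the character with $a=m=-1$, $b=1$ and $\mu=-1/2$. (iii) If $\psi(\chi)=mI_2$ and $2\mu\equiv k\pmod N$ for some $k\in\{1,\dots,N-2\}$, then $V(\chi,\mu)$ is a reducible, indecomposable $\mathcal U_\xi$-module which is an extension involving a $(k+1)$-dimensional simple $\mathcal U_\xi$-submodule, and every $\mathcal U_\xi$-endomorphism of $V(\chi,\mu)$ is a scalar multiple of the identity.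
   Context: $N\ge2$, $\xi=e^{\pi i/N}$, $\omega=\xi^2=e^{2\pi i/N}$, and $\omega^x:=e^{2\pi ix/N}$ for $x\in\mathbb C$. $\mathcal U_\xi$ is generated by $K^{\pm1},E,F$ with $KE=\xi^2EK$, $KF=\xi^{-2}FK$, $[E,F]=(\xi-\xi^{-1})(K-K^{-1})$. For $\alpha,\beta,\mu\in\mathbb C$, $V(\alpha,\beta,\mu)=\mathbb C^N$ with basis $v_n$ ($n\in\mathbb Z/N\mathbb Z$) and operators $x v_n=\omega^{\alpha-n}v_n$, $y v_n=\omega^\beta v_{n-1}$, $z v_n=\omega^\mu v_n$; it is a $\mathcal U_\xi$-module via $K\mapsto x$, $E\mapsto \xi y(z-x)$, $F\mapsto y^{-1}(1-z^{-1}x^{-1})$. A character $\chi=(a,b,m)\in(\mathbb C^\times)^3$ (values of $x^N,y^N,z^N$), and $V(\chi,\mu)$ denotes $V(\alpha,\beta,\mu)$ for any $\alpha,\beta$ with $\omega^{N\alpha}=a$, $\omega^{N\beta}=b$, where $\mu$ satisfies $\omega^{N\mu}=m$ (its isomorphism class depends only on $a,b,\omega^\mu$). Set $\psi(\chi)=\begin{pmatrix} a & -b(a-m)\\ b^{-1}(a-m^{-1}) & m+m^{-1}-a\end{pmatrix}\in SL_2(\mathbb C)$. *)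

From HB Require Import structures.
From mathcomp Require Import all_boot all_order all_algebra.
From mathcomp Require Import complex.
From mathcomp Require Import reals trigo.
Set Implicit Arguments. Unset Strict Implicit. Unset Printing Implicit Defensive.
Import Order.TTheory GRing.Theory Num.Theory.
Local Open Scope ring_scope.

Section Defs.
Variable R : realType.
Local Notation C := (complex R).

Definition qxi (N : nat) : C := Complex (cos (pi / N%:R)) (sin (pi / N%:R)).

(* Finite-dimensional U_xi-modules, in ROW-VECTOR convention:          *)
(* the generator g acts on C^d by v |-> v *m Mg.  Hence the operator   *)
(* g1 g2 (first g2, then g1) has matrix Mg2 *m Mg1.                    *)
Definition is_Umod (xi : C) d (K Ki E F : 'M[C]_d) : Prop :=
  [/\ K *m Ki = 1%:M, Ki *m K = 1%:M,
      E *m K = xi ^+ 2 *: (K *m E),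
      F *m K = xi ^- 2 *: (K *m F) &
      F *m E - E *m F = (xi - xi^-1) *: (K - Ki)].

Record Umod (xi : C) := MkUmod {
  udim : nat;
  uK : 'M[C]_udim; uKi : 'M[C]_udim; uE : 'M[C]_udim; uF : 'M[C]_udim;
  uax : is_Umod xi uK uKi uE uF }.

Definition Ustable d (K Ki E F : 'M[C]_d) m (W : 'M[C]_(m, d)) : Prop :=
  [/\ stablemx W K, stablemx W Ki, stablemx W E & stablemx W F].

Definition Usimple d (K Ki E F : 'M[C]_d) : Prop :=
  (0 < d)%N /\ forall W : 'M[C]_d, Ustable K Ki E F W -> W == 0 \/ (W == 1%:M)%MS.

Definition Usimple_sub d (K Ki E F : 'M[C]_d) (W : 'M[C]_d) : Prop :=
  [/\ Ustable K Ki E F W, W != 0 &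
      forall W' : 'M[C]_d, Ustable K Ki E F W' -> (W' <= W)%MS ->
        W' == 0 \/ (W' == W)%MS].

Definition Ureducible d (K Ki E F : 'M[C]_d) : Prop :=
  exists W : 'M[C]_d, [/\ Ustable K Ki E F W, W != 0 & ~~ (W == 1%:M)%MS].

Definition Uindecomposable d (K Ki E F : 'M[C]_d) : Prop :=
  (0 < d)%N /\
  forall W1 W2 : 'M[C]_d, Ustable K Ki E F W1 -> Ustable K Ki E F W2 ->
    mxdirect (W1 + W2) -> (W1 + W2 == 1%:M)%MS -> W1 == 0 \/ W2 == 0.

Definition Uendo d (K Ki E F : 'M[C]_d) (T : 'M[C]_d) : Prop :=
  [/\ K *m T = T *m K, Ki *m T = T *m Ki, E *m T = T *m E & F *m T = T *m F].

Definition Uhom xi (M M' : Umod xi) (f : 'M[C]_(udim M, udim M')) : Prop :=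
  [/\ uK M *m f = f *m uK M', uKi M *m f = f *m uKi M',
      uE M *m f = f *m uE M' & uF M *m f = f *m uF M'].

(* M lies in the category of (finite-dimensional) modules on which the
   central elements K^N, E^N, F^N act by the same scalars as on V *)
Definition same_Z0 xi N d (K Ki E F : 'M[C]_d) (M : Umod xi) : Prop :=
  forall c : C,
    (K ^+ N = c%:M -> uK M ^+ N = c%:M) /\
    (E ^+ N = c%:M -> uE M ^+ N = c%:M) /\
    (F ^+ N = c%:M -> uF M ^+ N = c%:M).

(* projective in that category: every epimorphism M ->> M' lets every
   morphism V -> M' lift to V -> M *)
Definition Uprojective xi N d (K Ki E F : 'M[C]_d) : Prop :=
  forall (HV : is_Umod xi K Ki E F) (M M' : Umod xi),
    same_Z0 N K Ki E F M -> same_Z0 N K Ki E F M' ->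
    forall (p : 'M[C]_(udim M, udim M')), Uhom p -> row_full p ->
    forall (g : 'M[C]_(d, udim M')), Uhom (M := MkUmod HV) g ->
    exists h : 'M[C]_(d, udim M), Uhom (M := MkUmod HV) h /\ h *m p = g.

(* The module V(alpha,beta,mu), written via A = omega^alpha,           *)
(* B = omega^beta, Z = omega^mu; basis v_n, n in Z/NZ = 'I_N.          *)
Definition Vx N (A : C) : 'M[C]_N :=
  \matrix_(i < N, j < N) (if i == j then A * (qxi N) ^- (2 * i)%N else 0).
Definition Vxi N (A : C) : 'M[C]_N :=
  \matrix_(i < N, j < N) (if i == j then A^-1 * (qxi N) ^+ (2 * i)%N else 0).
Definition Vy N (B : C) : 'M[C]_N :=
  \matrix_(i < N, j < N) (if (j : nat) == ((i + N - 1) %% N)%N then B else 0).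
Definition Vyi N (B : C) : 'M[C]_N :=
  \matrix_(i < N, j < N) (if (j : nat) == ((i + 1) %% N)%N then B^-1 else 0).

(* K |-> x, E |-> xi y (z - x), F |-> y^{-1} (1 - z^{-1} x^{-1}) *)
Definition VK N (A : C) : 'M[C]_N := Vx N A.
Definition VKi N (A : C) : 'M[C]_N := Vxi N A.
Definition VE N (A B Z : C) : 'M[C]_N := qxi N *: ((Z%:M - Vx N A) *m Vy N B).
Definition VF N (A B Z : C) : 'M[C]_N := (1%:M - Z^-1 *: Vxi N A) *m Vyi N B.

Definition psi (a b m : C) : 'M[C]_2 :=
  \matrix_(i < 2, j < 2)
    (if (i : nat) == 0%N then (if (j : nat) == 0%N then a else - b * (a - m))
     else (if (j : nat) == 0%N then b^-1 * (a - m^-1) else m + m^-1 - a)).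

End Defs.

(* In the basis [v_i], [K] is diagonal with the [N] distinct weights
   [A omega^-i], [E] maps [v_i] to a multiple of [v_(i-1)] and [F] to a multiple
   of [v_(i+1)].  Hence every nonzero submodule contains a basis vector, and the
   submodule structure is governed by the zeros of these coefficients along the
   cycle [Z/N].  The [E]-coefficient vanishes exactly where the weight is
   [Z = omega^mu], which happens for some [i] iff [a = m], i.e. iff [psi chi] is
   the scalar [m] (as [m^2 = 1]); otherwise no [E]-coefficient vanishes and [V]
   is simple.  If [v_b] has weight [Z], the [F]-coefficient vanishes only at
   [v_(b+k)], where [Z^2 = omega^k]: for [k = N-1] the [F]-string from [v_b]
   covers the cycle and [V] is simple; for [k < N-1] it spans a simple
   submodule of dimension [k+1] contained in every nonzero submodule, so [V] is
   indecomposable, and [E], [F] force a diagonal endomorphism to be scalar.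
   For projectivity ([k = N-1]), a morphism out of [V] is determined by the
   image of [v_b], any vector of weight [Z] killed by [E] defines one, and such
   vectors lift along epimorphisms: project a preimage onto the weight [Z] and
   apply [E^(N-1) F^(N-1)], which acts on them as a nonzero scalar. *)

From HB Require Import structures.
From mathcomp Require Import all_boot all_order all_algebra.
From mathcomp Require Import complex.
From mathcomp Require Import reals trigo.
From mathcomp Require Import fingroup perm.
From mathcomp Require Import ring.
Set Implicit Arguments. Unset Strict Implicit. Unset Printing Implicit Defensive.
Import Order.TTheory GRing.Theory Num.Theory.
Local Open Scope ring_scope.

Section RootsOfUnity.
Variables (R : realType) (n : nat).
Local Notation C := (complex R).
Local Notation N := n.+1.
Local Notation xi := (qxi R N).

Definition qomega (N : nat) : C := qxi R N ^+ 2.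
Local Notation omega := (qomega N).

Lemma cis_exprn (x : R) t :
  (Complex (cos x) (sin x) : C) ^+ t = Complex (cos (t%:R * x)) (sin (t%:R * x)).
Proof.
elim: t => [|t IH]; first by rewrite expr0 mul0r cos0 sin0.
rewrite exprSr IH mulrSr mulrDl mul1r cosD sinD.
rewrite -[(_ +i* _)%C * (_ +i* _)%C]/(_ +i* _)%C; congr Complex; ring.
Qed.

Lemma qxi_exprN : xi ^+ N = -1.
Proof.
rewrite cis_exprn mulrCA divff ?pnatr_eq0 // mulr1 cospi sinpi.
by rewrite -[-1 : C]/(Complex (-1) (-0)) oppr0.
Qed.

Lemma qxi_neq0 : xi != 0.
Proof.
apply: contra_eq_neq qxi_exprN => ->.
by rewrite expr0n eq_sym oppr_eq0 oner_eq0.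
Qed.

Lemma Im_qxi_expr_gt0 t : (0 < t < N)%N -> 0 < complex.Im (xi ^+ t).
Proof.
move=> /andP[t_gt0 t_ltN]; rewrite cis_exprn /=; apply: sin_gt0_pi.
have N_gt0 : (0 : R) < N%:R by rewrite ltr0n.
apply/andP; split; first by rewrite mulr_gt0 ?ltr0n // divr_gt0 // pi_gt0.
by rewrite mulrA ltr_pdivrMr // mulrC ltr_pM2l ?ltr_nat // pi_gt0.
Qed.

(* On the upper half turn [xi ^+ t] has positive imaginary part; the lower
   half turn is its opposite, by [xi ^+ N = -1]. *)
Lemma qxi_expr_neq1 t : (0 < t < N.*2)%N -> xi ^+ t != 1.
Proof.
move=> /andP[t_gt0 t_lt2N]; have [t_ltN|N_let] := ltnP t N.
  apply/eqP => h; have := Im_qxi_expr_gt0 (t := t).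
  by rewrite h t_gt0 t_ltN ltxx => /(_ isT).
have [->|N_neqt] := eqVneq t N.
  by rewrite qxi_exprN -subr_eq0 -opprD oppr_eq0 -(natrD _ 1 1) pnatr_eq0.
have N_ltt : (N < t)%N by rewrite ltn_neqAle eq_sym N_neqt N_let.
rewrite -(subnKC N_let) exprD qxi_exprN mulN1r; apply/eqP => h.
have := @Im_qxi_expr_gt0 (t - N).
rewrite subn_gt0 N_ltt ltn_subLR // addnn t_lt2N => /(_ isT).
have -> : xi ^+ (t - N) = -1 by rewrite -h opprK.
by rewrite /= oppr0 ltxx.
Qed.

Lemma qomega_prim : N.-primitive_root omega.
Proof.
apply/andP; split => //; apply/forallP => i; rewrite unity_rootE.
have [->|i_neq] := eqVneq i.+1 N.
  by rewrite /qomega -exprM mulnC exprM qxi_exprN sqrrN expr1n eqxx.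
have i_lt : (i.+1 < N)%N by rewrite ltn_neqAle i_neq ltn_ord.
apply/eqP/negbTE; rewrite /qomega -exprM; apply: qxi_expr_neq1.
by rewrite mul2n double_gt0 /= ltn_double.
Qed.

Lemma qomega_exprN : omega ^+ N = 1.
Proof. exact: prim_expr_order qomega_prim. Qed.

Lemma qomega_expr_neq0 t : omega ^+ t != 0.
Proof. by rewrite !expf_neq0 // qxi_neq0. Qed.

Lemma qomega_expr_inj (i j : nat) :
  (i < N)%N -> (j < N)%N -> omega ^+ i = omega ^+ j -> i = j.
Proof.
move=> i_lt j_lt /eqP; rewrite (eq_prim_root_expr qomega_prim) !modn_small //.
by move/eqP.
Qed.

Lemma exprz_modn (x : C) (j : int) :
  x != 0 -> x ^+ N = 1 -> x ^ j = x ^+ `|(j %% N)%Z|%N.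
Proof.
move=> x_neq0 xN; rewrite {1}(divz_eq j N) expfzDr // -exprz_exp.
by rewrite exprzAC -exprnP xN exp1rz mul1r exprnP gez0_abs // modz_ge0.
Qed.

Lemma exprN_eq_qomega (x y : C) :
  y != 0 -> x ^+ N = y ^+ N -> exists b : 'I_N, x = y * omega ^+ b.
Proof.
move=> y_neq0 xy; have : (x / y) ^+ N = 1 by rewrite expr_div_n xy divff // expf_neq0.
by case/(prim_rootP qomega_prim) => b xyb; exists b; rewrite -xyb mulrC divfK.
Qed.

End RootsOfUnity.

Section MatrixIteration.
Variable R : comPzRingType.

Definition mxiter d (M : 'M[R]_d) t (v : 'rV[R]_d) := iter t (fun u => u *m M) v.

Lemma mxiterS d (M : 'M[R]_d) t v : mxiter M t.+1 v = mxiter M t v *m M.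
Proof. by []. Qed.

Lemma mxiterSr d (M : 'M[R]_d) t v : mxiter M t.+1 v = mxiter M t (v *m M).
Proof. exact: iterSr. Qed.

Lemma mxiterD d (M : 'M[R]_d) s t v : mxiter M (s + t) v = mxiter M s (mxiter M t v).
Proof. exact: iterD. Qed.

Lemma mxiterZ d (M : 'M[R]_d) t c v : mxiter M t (c *: v) = c *: mxiter M t v.
Proof. by elim: t => [//|t IH]; rewrite !mxiterS IH -scalemxAl. Qed.

Lemma mxiter0 d (M : 'M[R]_d) t : mxiter M t 0 = 0.
Proof. by elim: t => [//|t IH]; rewrite mxiterS IH mul0mx. Qed.

Lemma mxiterE d (M : 'M[R]_d) t v : mxiter M t v = v *m M ^+ t.
Proof.
elim: t => [|t IH]; first by rewrite expr0 mulmx1.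
by rewrite mxiterS IH exprSr -mulmxA mulmxE.
Qed.

Lemma mxiter_intertwine d d' (M : 'M[R]_d) (M' : 'M[R]_d') (p : 'M[R]_(d, d')) t v :
  M *m p = p *m M' -> mxiter M t v *m p = mxiter M' t (v *m p).
Proof. by move=> Mp; elim: t => [//|t IH]; rewrite !mxiterS -mulmxA Mp mulmxA IH. Qed.

Lemma mxiter_eigen d (M : 'M[R]_d) t v c :
  v *m M = c *: v -> mxiter M t v = c ^+ t *: v.
Proof.
move=> vM; elim: t => [|t IH]; first by rewrite expr0 scale1r.
by rewrite mxiterS IH -scalemxAl vM scalerA exprSr mulrC.
Qed.

End MatrixIteration.

Section Vmodule.
Variables (R : realType) (n : nat).
Local Notation C := (complex R).
Local Notation N := n.+1.
Local Notation xi := (qxi R N).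
Local Notation omega := (qomega R N).
Variables (A B Z : C).
Hypotheses (A_neq0 : A != 0) (B_neq0 : B != 0) (Z_neq0 : Z != 0).

Local Notation VKA := (VK N A).
Local Notation VKiA := (VKi N A).
Local Notation VEA := (VE N A B Z).
Local Notation VFA := (VF N A B Z).

Definition bvec (i : 'I_N) : 'rV[C]_N := delta_mx 0 i.
Definition predZ (i : 'I_N) : 'I_N := inZp (i + N - 1).
Definition succZ (i : 'I_N) : 'I_N := inZp (i + 1).

Definition weight (i : 'I_N) : C := A * xi ^- (2 * i).
Definition Ecoef (i : 'I_N) : C := xi * ((Z - weight i) * B).
Definition Fcoef (i : 'I_N) : C := (1 - Z^-1 * (weight i)^-1) * B^-1.

Lemma predZ_inZpS t : predZ (inZp t.+1) = inZp t :> 'I_N.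
Proof.
apply/val_inj => /=; rewrite addnS subn1 /= modnDml.
by rewrite addSnnS modnDr.
Qed.

Lemma succZ_inZp t : succZ (inZp t) = inZp t.+1 :> 'I_N.
Proof. by apply/val_inj => /=; rewrite modnDml addn1. Qed.

Lemma inZp_addnK (b i : 'I_N) : inZp (b + (i + N - b) %% N) = i.
Proof.
apply/val_inj => /=; rewrite modnDmr subnKC ?modnDr ?modn_small //.
exact: leq_trans (ltnW (ltn_ord b)) (leq_addl i N).
Qed.

Lemma inZp_addn_inj (b s t : nat) : (s < N)%N -> (t < N)%N ->
  inZp (b + s) = inZp (b + t) :> 'I_N -> s = t.
Proof.
by move=> sN tN /(congr1 val) /= /eqP; rewrite eqn_modDl !modn_small // => /eqP.
Qed.

Lemma inZp_addn_neq (b : 'I_N) s : (0 < s < N)%N -> inZp (b + s) != b.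
Proof.
move=> /andP[s_gt0 sN]; apply/eqP => bs.
have := @inZp_addn_inj b s 0 sN (ltn0Sn n); rewrite addn0 valZpK bs => /(_ erefl) s0.
by rewrite s0 in s_gt0.
Qed.

Lemma inZp_addnP (b i : 'I_N) : exists2 t, (t < N)%N & i = inZp (b + t).
Proof. by exists ((i + N - b) %% N)%N; [exact: ltn_pmod | rewrite inZp_addnK]. Qed.

Lemma row_bvecE i d (X : 'M[C]_(N, d)) : row i X = bvec i *m X.
Proof. exact: rowE. Qed.

Lemma bvec_neq0 i : bvec i != 0.
Proof. by apply/rV0Pn; exists i; rewrite mxE !eqxx oner_eq0. Qed.

Lemma bvec_scale_inj a b (j : 'I_N) : a *: bvec j = b *: bvec j -> a = b.
Proof. by move/(congr1 (fun v : 'rV[C]_N => v 0 j)); rewrite !mxE !eqxx !mulr1. Qed.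

Lemma bvec_mul_diag (f : 'I_N -> C) (M : 'M[C]_N) i :
  (forall j, M i j = if i == j then f i else 0) -> bvec i *m M = f i *: bvec i.
Proof.
move=> Mi; rewrite /bvec -rowE; apply/rowP => j.
rewrite !mxE Mi eqxx /= [j == i]eq_sym.
by case: eqP => _; rewrite ?mulr1 ?mulr0.
Qed.

Lemma bvec_mul_shift (g : 'I_N -> 'I_N) (c : C) (M : 'M[C]_N) i :
  (forall j, M i j = if (j : nat) == g i then c else 0) -> bvec i *m M = c *: bvec (g i).
Proof.
move=> Mi; rewrite /bvec -rowE; apply/rowP => j; rewrite !mxE Mi eqxx /=.
case: (eqVneq j (g i)) => [->|j_neq]; first by rewrite !eqxx mulr1.
by rewrite ifF ?mulr0 //; apply/negbTE.
Qed.

Lemma bvec_K i : bvec i *m VKA = weight i *: bvec i.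
Proof. by apply: bvec_mul_diag => j; rewrite mxE. Qed.

Lemma bvec_Ki i : bvec i *m VKiA = (weight i)^-1 *: bvec i.
Proof.
apply: (@bvec_mul_diag (fun i => (weight i)^-1)) => j.
by rewrite mxE /weight invfM invrK; case: eqP => // ->; rewrite mulrC.
Qed.

Lemma bvec_y i : bvec i *m Vy N B = B *: bvec (predZ i).
Proof. by apply: bvec_mul_shift => j; rewrite mxE. Qed.

Lemma bvec_yi i : bvec i *m Vyi N B = B^-1 *: bvec (succZ i).
Proof. by apply: bvec_mul_shift => j; rewrite mxE. Qed.

Lemma bvec_E i : bvec i *m VEA = Ecoef i *: bvec (predZ i).
Proof.
rewrite /VE -scalemxAr mulmxA mulmxBr mul_mx_scalar -/(VK N A) bvec_K -scalerBl.
by rewrite -scalemxAl bvec_y !scalerA /Ecoef mulrA.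
Qed.

Lemma bvec_F i : bvec i *m VFA = Fcoef i *: bvec (succZ i).
Proof.
rewrite /VF mulmxA mulmxBr mulmx1 -scalemxAr -/(VKi N A) bvec_Ki scalerA.
by rewrite -{1}[bvec i]scale1r -scalerBl -scalemxAl bvec_yi scalerA.
Qed.

Lemma VK_diag : VKA = diag_mx (\row_i weight i).
Proof.
by apply/matrixP => i j; rewrite !mxE; case: eqP => [->|_]; rewrite ?mulr1n ?mulr0n.
Qed.

Lemma weight_inZp t : weight (inZp t) = A / omega ^+ t.
Proof. by rewrite /weight /= exprM (prim_expr_mod (qomega_prim R n)). Qed.

Lemma weight_inj : injective weight.
Proof.
move=> i j; rewrite -(valZpK i) -(valZpK j) !weight_inZp => /(mulfI A_neq0)/invr_inj.
by move/(qomega_expr_inj (ltn_ord i) (ltn_ord j)) => /val_inj ->.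
Qed.

Lemma weight_exprN i : weight i ^+ N = A ^+ N.
Proof.
rewrite -(valZpK i) weight_inZp exprMn exprVn -exprM mulnC exprM.
by rewrite qomega_exprN expr1n invr1 mulr1.
Qed.

Lemma VK_exprN : VKA ^+ N = (A ^+ N)%:M.
Proof.
apply/row_matrixP => i; rewrite !row_bvecE -mxiterE (mxiter_eigen _ (bvec_K i)).
by rewrite mul_mx_scalar weight_exprN.
Qed.

Lemma bvec_sub_step (W M : 'M[C]_N) i j c : stablemx W M ->
  bvec i *m M = c *: bvec j -> c != 0 -> (bvec i <= W)%MS -> (bvec j <= W)%MS.
Proof.
move=> sWM iM c_neq0 iW.
have : (c *: bvec j <= W)%MS by rewrite -iM; exact: submx_trans (submxMr M iW) sWM.
by move/(scalemx_sub c^-1); rewrite scalerA mulVf // scale1r.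
Qed.

(* The weights are distinct, so the polynomial in [K] vanishing at all weights
   but [weight i] projects onto the line of [bvec i]. *)
Lemma K_stable_bvec_sub (W : 'M[C]_N) (w : 'rV[C]_N) i :
  stablemx W VKA -> (w <= W)%MS -> w 0 i != 0 -> (bvec i <= W)%MS.
Proof.
move=> sWK wW wi_neq0.
pose p := \prod_(j < N | j != i) ('X - (weight j)%:P).
have pi_neq0 : p.[weight i] != 0.
  rewrite horner_prod; apply/prodf_neq0 => j j_neq; rewrite hornerXsubC subr_eq0.
  by apply: contra_neq j_neq => /weight_inj.
have wp : w *m horner_mx VKA p = (w 0 i * p.[weight i]) *: bvec i.
  rewrite VK_diag horner_mx_diag mul_mx_diag; apply/rowP => j; rewrite !mxE.
  have [->|j_neq] := eqVneq j i; first by rewrite eqxx mulr1.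
  by rewrite mulr0 horner_prod (bigD1 j) //= hornerXsubC subrr mul0r mulr0.
have := submx_trans (submxMr (horner_mx VKA p) wW) (horner_mx_stable p sWK).
rewrite wp => /(scalemx_sub (w 0 i * p.[weight i])^-1).
by rewrite scalerA mulVf ?scale1r // mulf_neq0.
Qed.

Lemma K_stable_has_bvec (W : 'M[C]_N) :
  W != 0 -> stablemx W VKA -> exists i, (bvec i <= W)%MS.
Proof.
move=> /matrix0Pn [r [j Wrj]] sWK; exists j.
by apply: (K_stable_bvec_sub sWK (row_sub r W)); rewrite mxE.
Qed.

Lemma E_stable_descend (W : 'M[C]_N) (b t : nat) : stablemx W VEA ->
  (forall s, (0 < s <= t)%N -> Ecoef (inZp (b + s)) != 0) ->
  (bvec (inZp (b + t)) <= W)%MS -> (bvec (inZp b) <= W)%MS.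
Proof.
move=> sWE; elim: t => [|t IH] Ecoef_neq0 tW; first by rewrite addn0 in tW.
apply: IH => [s /andP[s_gt0 st]|]; first by apply: Ecoef_neq0; rewrite s_gt0 ltnW.
have stepE : bvec (inZp (b + t.+1)) *m VEA =
    Ecoef (inZp (b + t.+1)) *: bvec (inZp (b + t)).
  by rewrite bvec_E addnS predZ_inZpS.
by apply: (bvec_sub_step sWE stepE _ tW); apply: Ecoef_neq0; rewrite /= leqnn.
Qed.

Lemma F_stable_ascend (W : 'M[C]_N) (b t : nat) : stablemx W VFA ->
  (forall s, (s < t)%N -> Fcoef (inZp (b + s)) != 0) ->
  (bvec (inZp b) <= W)%MS -> (bvec (inZp (b + t)) <= W)%MS.
Proof.
move=> sWF; elim: t => [|t IH] Fcoef_neq0 bW; first by rewrite addn0.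
have tW : (bvec (inZp (b + t)) <= W)%MS.
  by apply: IH => // s st; apply: Fcoef_neq0; rewrite ltnW.
have stepF : bvec (inZp (b + t)) *m VFA =
    Fcoef (inZp (b + t)) *: bvec (inZp (b + t.+1)).
  by rewrite bvec_F succZ_inZp addnS.
exact: (bvec_sub_step sWF stepF (Fcoef_neq0 t (ltnSn t)) tW).
Qed.

Lemma bvecs_eqmx1 (W : 'M[C]_N) : (forall j, (bvec j <= W)%MS) -> (W == 1%:M)%MS.
Proof.
move=> jW; rewrite submx1 /=; apply/row_subP => j.
by rewrite row1; exact: jW.
Qed.

Section Extremal.
Variables (b : 'I_N) (k : nat).
Hypothesis k_ltN : (k < N)%N.
Hypothesis Ecoef_eq0 : forall i, Ecoef i = 0 -> i = b.
Hypothesis Fcoef_eq0 : forall i, Fcoef i = 0 -> i = inZp (b + k).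

Lemma Ecoef_neq0_above t : (0 < t < N)%N -> Ecoef (inZp (b + t)) != 0.
Proof. by move=> t_range; apply/eqP => /Ecoef_eq0; apply/eqP; exact: inZp_addn_neq. Qed.

Lemma Fcoef_neq0_below s : (s < k)%N -> Fcoef (inZp (b + s)) != 0.
Proof.
move=> s_lt; apply/eqP => /Fcoef_eq0 /inZp_addn_inj.
by move=> /(_ (ltn_trans s_lt k_ltN) k_ltN) s_eq; rewrite s_eq ltnn in s_lt.
Qed.

Lemma Ustable_bvec_base (W : 'M[C]_N) :
  Ustable VKA VKiA VEA VFA W -> W != 0 -> (bvec b <= W)%MS.
Proof.
move=> [sWK _ sWE _] W_neq0; have [i iW] := K_stable_has_bvec W_neq0 sWK.
rewrite -(valZpK b); apply: (@E_stable_descend W b ((i + N - b) %% N) sWE).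
  move=> s /andP[s_gt0 s_le]; apply: Ecoef_neq0_above.
  by rewrite s_gt0 (leq_ltn_trans s_le) // ltn_pmod.
by rewrite inZp_addnK.
Qed.

Lemma Ustable_bvec_string (W : 'M[C]_N) t : Ustable VKA VKiA VEA VFA W -> W != 0 ->
  (t <= k)%N -> (bvec (inZp (b + t)) <= W)%MS.
Proof.
move=> sW W_neq0 t_le; have bW := Ustable_bvec_base sW W_neq0.
case: sW => _ _ _ sWF; apply: F_stable_ascend; rewrite ?valZpK //.
by move=> s s_lt; apply: Fcoef_neq0_below; exact: leq_trans s_lt t_le.
Qed.

Lemma Usimple_of_extremal : k = n -> Usimple VKA VKiA VEA VFA.
Proof.
move=> k_eq; split => // W sW; have [->|W_neq0] := eqVneq W 0; [by left|right].
apply: bvecs_eqmx1 => j; rewrite -(inZp_addnK b j).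
by apply: Ustable_bvec_string; rewrite // k_eq -ltnS ltn_pmod.
Qed.

Lemma Uindecomposable_of_extremal : Uindecomposable VKA VKiA VEA VFA.
Proof.
split => // W1 W2 sW1 sW2 /mxdirect_addsP W12_eq0 _.
have [W1_eq0|W1_neq0] := boolP (W1 == 0); [by left|].
have [W2_eq0|W2_neq0] := boolP (W2 == 0); [by right|].
have : (bvec b <= W1 :&: W2)%MS by rewrite sub_capmx !Ustable_bvec_base.
by rewrite W12_eq0 submx0 (negbTE (bvec_neq0 _)).
Qed.

End Extremal.

Lemma Usimple_of_exprN_neq : A ^+ N != Z ^+ N -> Usimple VKA VKiA VEA VFA.
Proof.
move=> AZ_neq.
have Ecoef_neq0 i : Ecoef i != 0.
  rewrite /Ecoef !mulf_neq0 ?qxi_neq0 // subr_eq0.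
  by apply: contra_neq AZ_neq => ->; rewrite weight_exprN.
split => // W sW; have [->|W_neq0] := eqVneq W 0; [by left|right].
apply: bvecs_eqmx1 => j; apply: (Ustable_bvec_base (b := j)) => // i /eqP.
by rewrite (negbTE (Ecoef_neq0 i)).
Qed.

Section Reducible.
Variables (b : 'I_N) (k : nat).
Hypothesis k_lt : (k < n)%N.
Hypotheses (Ecoef_eq0 : forall i, Ecoef i = 0 -> i = b) (Ecoef_b : Ecoef b = 0).
Hypotheses (Fcoef_eq0 : forall i, Fcoef i = 0 -> i = inZp (b + k))
           (Fcoef_bk : Fcoef (inZp (b + k)) = 0).

Let k_ltN : (k < N)%N := ltn_trans k_lt (ltnSn n).

Lemma rot_inj : injective (fun i : 'I_N => inZp (b + i) : 'I_N).
Proof. by move=> i j /inZp_addn_inj ij; apply/val_inj/ij. Qed.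

Definition Wk : 'M[C]_N := pid_mx k.+1 *m perm_mx (perm rot_inj).

Lemma row_Wk (i : 'I_N) : row i Wk = (i <= k)%N%:R *: bvec (inZp (b + i)).
Proof.
rewrite row_mul.
have -> : row i (pid_mx k.+1 : 'M[C]_N) = (i <= k)%N%:R *: bvec i.
  apply/rowP => j; rewrite !mxE eqxx /= [j == i]eq_sym ltnS.
  by case: (i <= k)%N; rewrite ?andbT ?andbF ?mulr1 ?mul1r ?mul0r.
rewrite -scalemxAl; congr (_ *: _).
by rewrite /bvec -rowE; apply/rowP => j; rewrite !mxE permE eqxx eq_sym.
Qed.

Lemma bvec_sub_Wk t : (t <= k)%N -> (bvec (inZp (b + t)) <= Wk)%MS.
Proof.
move=> t_le; have := row_sub (inZp t) Wk.
by rewrite row_Wk /= modn_small ?(leq_ltn_trans t_le) // t_le scale1r.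
Qed.

Lemma rank_Wk : \rank Wk = k.+1.
Proof. by rewrite mxrankMfree ?row_free_unit ?unitmx_perm // rank_pid_mx. Qed.

Lemma Wk_neq0 : Wk != 0.
Proof. by rewrite -mxrank_eq0 rank_Wk. Qed.

Lemma Wk_neq1 : ~~ (Wk == 1%:M)%MS.
Proof.
by apply/negP => /andP[_ /mxrankS]; rewrite mxrank1 rank_Wk ltnS leqNgt k_lt.
Qed.

Lemma Ustable_Wk : Ustable VKA VKiA VEA VFA Wk.
Proof.
have stable_Wk M : (forall t, (t <= k)%N -> (bvec (inZp (b + t)) *m M <= Wk)%MS) ->
    stablemx Wk M.
  move=> tM; apply/row_subP => i; rewrite row_mul row_Wk.
  by case: leqP => ik; rewrite ?scale0r ?mul0mx ?sub0mx // scale1r tM.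
split; apply: stable_Wk => t t_le.
- by rewrite bvec_K scalemx_sub // bvec_sub_Wk.
- by rewrite bvec_Ki scalemx_sub // bvec_sub_Wk.
- rewrite bvec_E; case: t t_le => [|t] t_le.
    by rewrite addn0 valZpK Ecoef_b scale0r sub0mx.
  by rewrite addnS predZ_inZpS scalemx_sub // bvec_sub_Wk // ltnW.
- rewrite bvec_F succZ_inZp; case: (ltngtP t k) t_le => // [t_lt _|-> _].
    by rewrite -addnS scalemx_sub // bvec_sub_Wk.
  by rewrite Fcoef_bk scale0r sub0mx.
Qed.

Lemma Ustable_Wk_sub (W : 'M[C]_N) : Ustable VKA VKiA VEA VFA W -> W != 0 -> (Wk <= W)%MS.
Proof.
move=> sW W_neq0; apply/row_subP => i; rewrite row_Wk.
case: leqP => i_le; rewrite ?scale0r ?sub0mx // scale1r.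
exact: (Ustable_bvec_string k_ltN Ecoef_eq0 Fcoef_eq0).
Qed.

Lemma Ureducible_of_Wk : Ureducible VKA VKiA VEA VFA.
Proof. by exists Wk; split; [exact: Ustable_Wk | exact: Wk_neq0 | exact: Wk_neq1]. Qed.

Lemma Usimple_sub_Wk : Usimple_sub VKA VKiA VEA VFA Wk.
Proof.
split; [exact: Ustable_Wk | exact: Wk_neq0 |] => W sW W_sub.
have [->|W_neq0] := eqVneq W 0; [by left|right].
by rewrite /eqmx W_sub Ustable_Wk_sub.
Qed.

(* Commuting with [K] makes [T] diagonal.  [E] or [F] carries the entry at
   [t + 1] to the one at [t] unless both coefficients vanish, which would put
   [t] at [b + k] and [t + 1] at [b], impossible as [k + 1 < N]. *)
Lemma Uendo_scalar T : Uendo VKA VKiA VEA VFA T -> exists c, T = c%:M.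
Proof.
case=> TK _ TE TF.
have T_offdiag i j : i != j -> T i j = 0.
  move=> ij; have := congr1 (fun M : 'M[C]_N => M i j) TK.
  rewrite VK_diag mul_diag_mx mul_mx_diag !mxE => /eqP.
  rewrite [X in _ == X]mulrC -subr_eq0 -mulrBl mulf_eq0 => /orP[|/eqP //].
  by rewrite subr_eq0 => /eqP /weight_inj /eqP; rewrite (negbTE ij).
have bvec_T i : bvec i *m T = T i i *: bvec i.
  by apply: (@bvec_mul_diag (fun i => T i i)) => j; case: eqVneq => [->|/T_offdiag].
have T_predZ i : Ecoef i != 0 -> T (predZ i) (predZ i) = T i i.
  move=> c_neq0; have := congr1 (mulmx (bvec i)) TE.
  rewrite !mulmxA bvec_E -scalemxAl !bvec_T -scalemxAl bvec_E !scalerA.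
  by move/bvec_scale_inj; rewrite [RHS]mulrC => /(mulfI c_neq0).
have T_succZ i : Fcoef i != 0 -> T (succZ i) (succZ i) = T i i.
  move=> c_neq0; have := congr1 (mulmx (bvec i)) TF.
  rewrite mulmxA [RHS]mulmxA bvec_F -scalemxAl !bvec_T -scalemxAl bvec_F !scalerA.
  by move/bvec_scale_inj; rewrite [RHS]mulrC => /(mulfI c_neq0).
have T_const t : T (inZp t) (inZp t) = T (inZp 0) (inZp 0).
  elim: t => [//|t <-].
  have [/Ecoef_eq0 Et|Et] := eqVneq (Ecoef (inZp t.+1)) 0; last first.
    by rewrite -(T_predZ _ Et) predZ_inZpS.
  have [/Fcoef_eq0 Ft|Ft] := eqVneq (Fcoef (inZp t)) 0; last first.
    by rewrite -(T_succZ _ Ft) succZ_inZp.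
  have : inZp (b + k.+1) = inZp (b + 0) :> 'I_N.
    by rewrite addn0 valZpK addnS -succZ_inZp -Ft succZ_inZp Et.
  by move/inZp_addn_inj => /(_ k_lt (ltn0Sn n)).
exists (T (inZp 0) (inZp 0)); apply/matrixP => i j; rewrite mxE.
have [<-|ij] := eqVneq i j; last by rewrite T_offdiag.
by rewrite mulr1n -(valZpK i) T_const.
Qed.

End Reducible.

Definition sweight t : C := Z / omega ^+ t.

(* [E F^(t+1) v = kappa (t+1) F^t v] for a vector [v] of weight [Z] killed by [E]. *)
Definition kappa t : C := \sum_(s < t) (xi - xi^-1) * (sweight s - (sweight s)^-1).

(* Averaging over the powers of [Z^-1 K]: when [K ^+ N = Z ^+ N] this projects
   onto the [Z]-eigenspace of [K]. *)
Definition Zproj d (K : 'M[C]_d) (v : 'rV[C]_d) : 'rV[C]_d :=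
  N%:R^-1 *: \sum_(i < N) Z^-1 ^+ i *: mxiter K i v.

Lemma sweight_neq0 t : sweight t != 0.
Proof. by rewrite mulf_neq0 // invr_neq0 // qomega_expr_neq0. Qed.

Lemma Zproj_id d (K : 'M[C]_d) v : v *m K = Z *: v -> Zproj K v = v.
Proof.
move=> vK; rewrite /Zproj.
have -> : \sum_(i < N) Z^-1 ^+ i *: mxiter K i v = \sum_(i < N) v.
  apply: eq_bigr => i _; rewrite (mxiter_eigen _ vK) scalerA -exprMn mulVf //.
  by rewrite expr1n scale1r.
by rewrite sumr_const card_ord -scalerMnr scalerMnl -mulr_natr mulVf ?scale1r // pnatr_eq0.
Qed.

Lemma Zproj_intertwine d d' (K : 'M[C]_d) (K' : 'M[C]_d') (p : 'M[C]_(d, d')) v :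
  K *m p = p *m K' -> Zproj K v *m p = Zproj K' (v *m p).
Proof.
move=> Kp; rewrite /Zproj -scalemxAl mulmx_suml; congr (_ *: _).
by apply: eq_bigr => i _; rewrite -scalemxAl (mxiter_intertwine _ _ Kp).
Qed.

Lemma Zproj_eigen d (K : 'M[C]_d) v :
  mxiter K N v = Z ^+ N *: v -> Zproj K v *m K = Z *: Zproj K v.
Proof.
move=> KN; rewrite /Zproj -scalemxAl scalerA mulrC -scalerA; congr (_ *: _).
rewrite mulmx_suml scaler_sumr; under eq_bigr do rewrite -scalemxAl.
rewrite big_ord_recr /= [in RHS]big_ord_recl /= addrC; congr (_ + _).
  rewrite -mxiterS KN expr0 scale1r !scalerA; congr (_ *: _).
  by rewrite exprS mulrCA -exprMn mulVf // expr1n mulr1.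
by apply: eq_bigr => i _; rewrite scalerA exprS mulrA mulfV // mul1r.
Qed.

Section Singular.
Variables (d : nat) (K Ki E F : 'M[C]_d).
Hypothesis UK : is_Umod xi K Ki E F.

Lemma Umod_Ki_eigen (u : 'rV[C]_d) c : u *m K = c *: u -> c != 0 -> u *m Ki = c^-1 *: u.
Proof.
case: UK => KKi _ _ _ _ uK c_neq0.
rewrite -[u *m Ki]scale1r -(mulVf c_neq0) -scalerA scalemxAl -uK -mulmxA KKi.
by rewrite mulmx1.
Qed.

Lemma Umod_F_iter_eigen (v : 'rV[C]_d) t :
  v *m K = Z *: v -> mxiter F t v *m K = sweight t *: mxiter F t v.
Proof.
case: UK => _ _ _ FK _ vK; elim: t => [|t IH]; first by rewrite /sweight expr0 divr1.
rewrite mxiterS -mulmxA FK -scalemxAr mulmxA IH -scalemxAl scalerA -mxiterS.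
by congr (_ *: _); rewrite /sweight [omega ^+ t.+1]exprS [(omega * _)^-1]invfM [RHS]mulrCA.
Qed.

Lemma Umod_E_iter_eigen (u : 'rV[C]_d) c t :
  u *m K = c *: u -> mxiter E t u *m K = (c * omega ^+ t) *: mxiter E t u.
Proof.
case: UK => _ _ EK _ _ uK; elim: t => [|t IH]; first by rewrite expr0 mulr1.
rewrite mxiterS -mulmxA EK -scalemxAr mulmxA IH -scalemxAl scalerA -mxiterS.
by congr (_ *: _); rewrite [omega ^+ t.+1]exprS [RHS]mulrCA.
Qed.

Lemma Umod_E_F_iter (v : 'rV[C]_d) t : v *m K = Z *: v -> v *m E = 0 ->
  mxiter F t.+1 v *m E = kappa t.+1 *: mxiter F t v.
Proof.
case: UK => _ _ _ _ EF vK vE.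
have FE : F *m E = E *m F + (xi - xi^-1) *: (K - Ki) by rewrite -EF addrC subrK.
elim: t => [|t IH].
  rewrite mxiterS -mulmxA FE mulmxDr mulmxA vE mul0mx add0r -scalemxAr mulmxBr.
  rewrite vK (Umod_Ki_eigen vK Z_neq0) -scalerBl scalerA /kappa big_ord1.
  by rewrite /sweight expr0 divr1.
rewrite mxiterS -mulmxA FE mulmxDr mulmxA IH -scalemxAl -mxiterS -scalemxAr mulmxBr.
have tK := Umod_F_iter_eigen t.+1 vK.
rewrite tK (Umod_Ki_eigen tK (sweight_neq0 t.+1)) -scalerBl scalerA -scalerDl.
by rewrite /kappa [in RHS]big_ord_recr.
Qed.

Lemma Umod_E_iter_F_iter (v : 'rV[C]_d) t : v *m K = Z *: v -> v *m E = 0 ->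
  mxiter E t (mxiter F t v) = (\prod_(s < t) kappa s.+1) *: v.
Proof.
move=> vK vE; elim: t => [|t IH]; first by rewrite big_ord0 scale1r.
by rewrite mxiterSr Umod_E_F_iter // mxiterZ IH scalerA big_ord_recr /= mulrC.
Qed.

End Singular.

Section HighestWeight.
Variable b : 'I_N.
Hypothesis A_eq : A = Z * omega ^+ b.

Lemma weight_string t : weight (inZp (b + t)) = sweight t.
Proof.
by rewrite weight_inZp A_eq /sweight exprD invfM mulrA mulfK ?qomega_expr_neq0.
Qed.

Lemma weight_base : weight b = Z.
Proof. by have := weight_string 0; rewrite addn0 valZpK /sweight expr0 divr1. Qed.

Lemma Ecoef_eq0_base i : Ecoef i = 0 -> i = b.
Proof.
rewrite /Ecoef => /eqP; rewrite !mulf_eq0 (negbTE (qxi_neq0 R n)) (negbTE B_neq0) orbF.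
by rewrite subr_eq0 => /eqP Z_eq; apply: weight_inj; rewrite -Z_eq weight_base.
Qed.

Lemma Ecoef_base : Ecoef b = 0.
Proof. by rewrite /Ecoef weight_base subrr mul0r mulr0. Qed.

Lemma exprN_A_Z : A ^+ N = Z ^+ N.
Proof. by rewrite A_eq exprMn -exprM mulnC exprM qomega_exprN expr1n mulr1. Qed.

Lemma bvec_base_K : bvec b *m VKA = Z *: bvec b.
Proof. by rewrite bvec_K weight_base. Qed.

Lemma bvec_base_E : bvec b *m VEA = 0.
Proof. by rewrite bvec_E Ecoef_base scale0r. Qed.

Variable k : nat.
Hypothesis Z_sqr : Z ^+ 2 = omega ^+ k.

Lemma Z_weight_top : Z * weight (inZp (b + k)) = 1.
Proof.
by rewrite weight_string /sweight mulrA -expr2 Z_sqr mulfV ?qomega_expr_neq0.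
Qed.

Lemma Fcoef_eq0_top i : Fcoef i = 0 -> i = inZp (b + k).
Proof.
rewrite /Fcoef => /eqP; rewrite mulf_eq0 invr_eq0 (negbTE B_neq0) orbF subr_eq0.
move=> /eqP Fi; apply: weight_inj; apply: (mulfI Z_neq0); rewrite Z_weight_top.
by apply/eqP; rewrite -invr_eq1 invfM -Fi.
Qed.

Lemma Fcoef_top : Fcoef (inZp (b + k)) = 0.
Proof. by rewrite /Fcoef -invfM Z_weight_top invr1 subrr mul0r. Qed.

Lemma V_nonsplit_extension : (k < n)%N ->
  [/\ Ureducible VKA VKiA VEA VFA,
      Uindecomposable VKA VKiA VEA VFA,
      exists W : 'M[C]_N, Usimple_sub VKA VKiA VEA VFA W /\ \rank W = k.+1
    & forall T : 'M[C]_N, Uendo VKA VKiA VEA VFA T -> exists c, T = c%:M].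
Proof.
move=> k_lt; split.
- exact: Ureducible_of_Wk k_lt Ecoef_base Fcoef_top.
- exact: Uindecomposable_of_extremal Ecoef_eq0_base.
- exists (Wk b k); split; last exact: rank_Wk.
  exact: Usimple_sub_Wk k_lt Ecoef_eq0_base Ecoef_base Fcoef_eq0_top Fcoef_top.
- exact: Uendo_scalar k_lt Ecoef_eq0_base Fcoef_eq0_top.
Qed.

End HighestWeight.

Section Projective.
Variable b : 'I_N.
Hypotheses (A_eq : A = Z * omega ^+ b) (Z_sqr : Z ^+ 2 = omega ^+ n).
Hypothesis UV : is_Umod xi VKA VKiA VEA VFA.

Let Ecoef_eq0 := Ecoef_eq0_base A_eq.
Let Fcoef_eq0 := Fcoef_eq0_top A_eq Z_sqr.
Let Fcoef_neq0 := Fcoef_neq0_below (ltnSn n) Fcoef_eq0.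

Definition Fprod t := \prod_(s < t) Fcoef (inZp (b + s)).

Lemma Fprod_neq0 t : (t <= n)%N -> Fprod t != 0.
Proof. by move=> t_le; apply/prodf_neq0 => s _; rewrite Fcoef_neq0 // (leq_trans _ t_le). Qed.

Lemma FprodS t : Fprod t.+1 = Fprod t * Fcoef (inZp (b + t)).
Proof. by rewrite /Fprod big_ord_recr. Qed.

Lemma mxiter_VF_base t : mxiter VFA t (bvec b) = Fprod t *: bvec (inZp (b + t)).
Proof.
elim: t => [|t IH]; first by rewrite /Fprod big_ord0 scale1r addn0 valZpK.
by rewrite mxiterS IH -scalemxAl bvec_F succZ_inZp -addnS scalerA -FprodS.
Qed.

Lemma kappa_string s : (s < n)%N ->
  kappa s.+1 = Fcoef (inZp (b + s)) * Ecoef (inZp (b + s.+1)).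
Proof.
move=> s_lt; have := Umod_E_F_iter UV s (bvec_base_K A_eq) (bvec_base_E A_eq).
rewrite !mxiter_VF_base -scalemxAl bvec_E addnS predZ_inZpS -addnS !scalerA FprodS.
by move=> /bvec_scale_inj; rewrite -mulrA mulrC => /(mulIf (Fprod_neq0 (ltnW s_lt))).
Qed.

Lemma kappa_neq0 s : (s < n)%N -> kappa s.+1 != 0.
Proof.
move=> s_lt; rewrite kappa_string // mulf_neq0 ?Fcoef_neq0 //.
by apply: (Ecoef_neq0_above Ecoef_eq0); rewrite /= ltnS.
Qed.

Lemma VE_exprN : VEA ^+ N = 0%:M.
Proof.
apply/row_matrixP => i; rewrite raddf0 row0 row_bvecE -mxiterE.
have [t t_lt ->] := inZp_addnP b i.
have E_down s : exists c, mxiter VEA s (bvec (inZp (b + s))) = c *: bvec b.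
  elim: s => [|s [c IH]]; first by exists 1; rewrite addn0 valZpK scale1r.
  exists (Ecoef (inZp (b + s.+1)) * c).
  by rewrite mxiterSr bvec_E addnS predZ_inZpS -addnS mxiterZ IH scalerA.
have [c Et] := E_down t.
rewrite -[X in mxiter _ X _](subnK t_lt) mxiterD mxiterS Et -scalemxAl.
by rewrite (bvec_base_E A_eq) scaler0 mxiter0.
Qed.

Lemma VF_exprN : VFA ^+ N = 0%:M.
Proof.
apply/row_matrixP => i; rewrite raddf0 row0 row_bvecE -mxiterE.
have F_up j s : exists c, mxiter VFA s (bvec j) = c *: bvec (inZp (j + s)).
  elim: s => [|s [c IH]]; first by exists 1; rewrite addn0 valZpK scale1r.
  exists (c * Fcoef (inZp (j + s))).
  by rewrite mxiterS IH -scalemxAl bvec_F succZ_inZp addnS scalerA.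
set top : 'I_N := inZp (b + n).
have t_lt : ((top + N - i) %% N < N)%N by exact: ltn_pmod.
have [c Ft] := F_up i ((top + N - i) %% N)%N.
rewrite -[X in mxiter _ X _](subnK t_lt) mxiterD mxiterS Ft inZp_addnK -scalemxAl bvec_F.
by rewrite (Fcoef_top A_eq Z_sqr) scale0r scaler0 mxiter0.
Qed.

Lemma VF_hom_eq d (F' : 'M[C]_d) (g1 g2 : 'M[C]_(N, d)) :
  VFA *m g1 = g1 *m F' -> VFA *m g2 = g2 *m F' -> bvec b *m g1 = bvec b *m g2 -> g1 = g2.
Proof.
move=> g1F g2F g12; apply/row_matrixP => i; rewrite !row_bvecE.
have [t t_lt ->] := inZp_addnP b i.
have -> : bvec (inZp (b + t)) = (Fprod t)^-1 *: mxiter VFA t (bvec b).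
  by rewrite mxiter_VF_base scalerA mulVf ?scale1r // Fprod_neq0 // -ltnS.
by rewrite -!scalemxAl !(mxiter_intertwine _ _ g1F, mxiter_intertwine _ _ g2F) g12.
Qed.

(* A preimage of [w'] projected onto the weight [Z] is a vector [u] of weight
   [Z] over [w']; since [E ^+ N = 0], [E^n F^n u] is killed by [E], while [E^n F^n]
   acts on [w'] as the scalar [\prod_(s < n) kappa s.+1 != 0]. *)
Lemma Umod_singular_lift d d' (K1 Ki1 E1 F1 : 'M[C]_d) (K2 Ki2 E2 F2 : 'M[C]_d')
    (p : 'M[C]_(d, d')) (w' : 'rV[C]_d') :
  is_Umod xi K1 Ki1 E1 F1 -> is_Umod xi K2 Ki2 E2 F2 ->
  K1 ^+ N = (A ^+ N)%:M -> E1 ^+ N = 0%:M ->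
  K1 *m p = p *m K2 -> E1 *m p = p *m E2 -> F1 *m p = p *m F2 -> row_full p ->
  w' *m K2 = Z *: w' -> w' *m E2 = 0 ->
  exists2 w, w *m K1 = Z *: w /\ w *m E1 = 0 & w *m p = w'.
Proof.
move=> U1 U2 K1N E1N pK pE pF p_full w'K w'E.
pose u := Zproj K1 (w' *m pinvmx p).
have uK : u *m K1 = Z *: u.
  by apply: Zproj_eigen; rewrite mxiterE K1N mul_mx_scalar (exprN_A_Z A_eq).
have up : u *m p = w'.
  by rewrite (Zproj_intertwine _ pK) mulmxKpV ?submx_full // Zproj_id.
pose c := \prod_(s < n) kappa s.+1.
have c_neq0 : c != 0 by apply/prodf_neq0 => s _; exact: kappa_neq0.
exists (c^-1 *: mxiter E1 n (mxiter F1 n u)); first split.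
- rewrite -scalemxAl (Umod_E_iter_eigen U1 _ (Umod_F_iter_eigen U1 _ uK)).
  by rewrite /sweight divfK ?qomega_expr_neq0 // scalerA mulrC -scalerA.
- by rewrite -scalemxAl -mxiterS mxiterE E1N mul_mx_scalar scale0r scaler0.
rewrite -scalemxAl (mxiter_intertwine _ _ pE) (mxiter_intertwine _ _ pF) up.
by rewrite (Umod_E_iter_F_iter U2 _ w'K w'E) scalerA mulVf // scale1r.
Qed.

Section Lift.
Variables (d : nat) (K1 Ki1 E1 F1 : 'M[C]_d).
Hypotheses (U1 : is_Umod xi K1 Ki1 E1 F1) (F1N : F1 ^+ N = 0%:M).
Variable w : 'rV[C]_d.
Hypotheses (wK : w *m K1 = Z *: w) (wE : w *m E1 = 0).

Let Vrow t := (Fprod t)^-1 *: mxiter F1 t w.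

Definition Vhom : 'M[C]_(N, d) := \matrix_(i < N) Vrow ((i + N - b) %% N).

Lemma row_Vhom t : (t < N)%N -> row (inZp (b + t)) Vhom = Vrow t.
Proof.
move=> t_lt; rewrite rowK; congr Vrow.
by apply: (@inZp_addn_inj b); rewrite ?ltn_pmod ?inZp_addnK.
Qed.

Lemma bvec_base_Vhom : bvec b *m Vhom = w.
Proof.
by rewrite -row_bvecE -[b]valZpK -[val b]addn0 row_Vhom // /Vrow /Fprod big_ord0 invr1 scale1r.
Qed.

Lemma Vrow_K t : Vrow t *m K1 = sweight t *: Vrow t.
Proof. by rewrite -scalemxAl (Umod_F_iter_eigen U1 _ wK) !scalerA mulrC. Qed.

Lemma Vhom_K : VKA *m Vhom = Vhom *m K1.
Proof.
apply/row_matrixP => i; have [t t_lt ->] := inZp_addnP b i.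
rewrite [LHS]row_mul [RHS]row_mul row_bvecE bvec_K (weight_string A_eq) -scalemxAl -row_bvecE.
by rewrite row_Vhom // Vrow_K.
Qed.

Lemma Vhom_Ki : VKiA *m Vhom = Vhom *m Ki1.
Proof.
apply/row_matrixP => i; have [t t_lt ->] := inZp_addnP b i.
rewrite [LHS]row_mul [RHS]row_mul row_bvecE bvec_Ki (weight_string A_eq) -scalemxAl -row_bvecE.
by rewrite row_Vhom // (Umod_Ki_eigen U1 (Vrow_K t) (sweight_neq0 t)).
Qed.

Lemma Vhom_E : VEA *m Vhom = Vhom *m E1.
Proof.
apply/row_matrixP => i; have [t t_lt ->] := inZp_addnP b i.
rewrite [LHS]row_mul [RHS]row_mul row_bvecE bvec_E -scalemxAl -row_bvecE.
rewrite row_Vhom // /Vrow -scalemxAl.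
case: t t_lt => [|s] s_lt.
  by rewrite addn0 valZpK (Ecoef_base A_eq) !scale0r wE scaler0.
rewrite [in LHS]addnS predZ_inZpS row_Vhom 1?ltnW // /Vrow (Umod_E_F_iter U1 s wK wE).
rewrite !scalerA FprodS kappa_string // addnS; congr (_ *: _).
by field; rewrite Fcoef_neq0 ?Fprod_neq0 // ltnW.
Qed.

Lemma Vhom_F : VFA *m Vhom = Vhom *m F1.
Proof.
apply/row_matrixP => i; have [t t_lt ->] := inZp_addnP b i.
rewrite [LHS]row_mul [RHS]row_mul row_bvecE bvec_F -scalemxAl -row_bvecE succZ_inZp -addnS.
rewrite [in RHS]row_Vhom // /Vrow -scalemxAl -mxiterS.
move: t_lt; rewrite ltnS leq_eqVlt => /orP[/eqP ->|t_lt].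
  by rewrite (Fcoef_top A_eq Z_sqr) scale0r mxiterE F1N mul_mx_scalar !scale0r scaler0.
rewrite row_Vhom // /Vrow scalerA FprodS; congr (_ *: _).
by field; rewrite Fcoef_neq0 ?Fprod_neq0 // ltnW.
Qed.

End Lift.
End Projective.

Lemma V_Uprojective (b : 'I_N) : A = Z * omega ^+ b -> Z ^+ 2 = omega ^+ n ->
  Uprojective xi N VKA VKiA VEA VFA.
Proof.
move=> A_eq Z_sqr UV M M' ZM ZM' p [pK _ pE pF] p_full g [gK _ gE gF].
have [K1N _] := ZM (A ^+ N); have [_ [E1N F1N]] := ZM 0.
have w'K : (bvec b *m g) *m uK M' = Z *: (bvec b *m g).
  by rewrite -mulmxA -gK mulmxA (bvec_base_K A_eq) -scalemxAl.
have w'E : (bvec b *m g) *m uE M' = 0.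
  by rewrite -mulmxA -gE mulmxA (bvec_base_E A_eq) mul0mx.
have [w [wK wE] wp] := Umod_singular_lift A_eq Z_sqr UV (uax M) (uax M')
  (K1N VK_exprN) (E1N (VE_exprN A_eq)) pK pE pF p_full w'K w'E.
have U1 := uax M; have {}F1N := F1N (VF_exprN A_eq Z_sqr).
exists (Vhom b (uF M) w); split; first split.
- exact: (Vhom_K A_eq U1 wK).
- exact: (Vhom_Ki A_eq U1 wK).
- exact: (Vhom_E A_eq Z_sqr UV U1 wK wE).
- exact: (Vhom_F A_eq Z_sqr F1N).
apply: (VF_hom_eq A_eq Z_sqr (F' := uF M')) => //.
- by rewrite mulmxA Vhom_F // -!mulmxA pF.
- by rewrite mulmxA bvec_base_Vhom.
Qed.

End Vmodule.

Lemma psi_scalar (R : realType) (a b m : complex R) :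
  m * m = 1 -> a = m -> psi a b m = m%:M.
Proof.
move=> mm am.
have m_neq0 : m != 0 by apply: contra_eq_neq mm => ->; rewrite mul0r eq_sym oner_eq0.
have mV : m^-1 = m by apply: (mulIf m_neq0); rewrite mulVf.
apply/matrixP => i j; rewrite !mxE.
case: i => [[|[|//]] ?]; case: j => [[|[|//]] ?] /=;
  by rewrite ?am ?mV ?subrr ?mulr0 ?oppr0 ?mulr1n ?mulr0n ?addrK.
Qed.

Section HalfIntegerCharge.
Variables (R : realType) (n : nat) (j : int).
Local Notation C := (complex R).
Local Notation N := n.+1.
Local Notation xi := (qxi R N).
Local Notation omega := (qomega R N).
Local Notation Z := (xi ^ j).

Lemma qxi_exprz_neq0 : Z != 0.
Proof. by rewrite expfz_neq0 // qxi_neq0. Qed.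

Lemma qxi_exprz_sqr : Z ^+ 2 = omega ^+ `|(j %% N)%Z|%N.
Proof.
have omega_neq0 : omega != 0 := qomega_expr_neq0 R n 1.
by rewrite exprnP exprzAC -exprnP (exprz_modn _ omega_neq0 (qomega_exprN R n)).
Qed.

Lemma qxi_exprz_exprN_sqr : Z ^+ N * Z ^+ N = 1.
Proof.
rewrite -exprD addnn -mul2n exprM qxi_exprz_sqr -exprM mulnC exprM.
by rewrite qomega_exprN expr1n.
Qed.

Variables (A B : C).
Hypotheses (A_neq0 : A != 0) (B_neq0 : B != 0) (AN_ZN : A ^+ N = Z ^+ N).

Lemma V_Usimple_Uprojective : (j = -1 %[mod N])%Z ->
  Usimple (VK N A) (VKi N A) (VE N A B Z) (VF N A B Z) /\
  Uprojective xi N (VK N A) (VKi N A) (VE N A B Z) (VF N A B Z).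
Proof.
move=> j_mod; have [b A_eq] := exprN_eq_qomega qxi_exprz_neq0 AN_ZN.
have Z_sqr : Z ^+ 2 = omega ^+ n.
  rewrite qxi_exprz_sqr j_mod.
  have -> : (-1 : int) = (-1) * N%:Z + n%:Z.
    by rewrite mulN1r -addn1 PoszD opprD addrAC addNr add0r.
  by rewrite modzMDl modz_small // ltz_nat leqnn.
have Z_neq0 := qxi_exprz_neq0.
split; last exact: V_Uprojective A_eq Z_sqr.
apply: (Usimple_of_extremal (b := b) A_neq0 (ltnSn n)) => //.
- exact: Ecoef_eq0_base A_eq.
- exact: (Fcoef_eq0_top A_neq0 B_neq0 Z_neq0 A_eq Z_sqr).
Qed.

Lemma V_nonsplit_of_modz (k : nat) : (k < n)%N -> (j = k %[mod N])%Z ->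
  [/\ Ureducible (VK N A) (VKi N A) (VE N A B Z) (VF N A B Z),
      Uindecomposable (VK N A) (VKi N A) (VE N A B Z) (VF N A B Z),
      exists W : 'M[C]_N,
        Usimple_sub (VK N A) (VKi N A) (VE N A B Z) (VF N A B Z) W /\ \rank W = k.+1
    & forall T : 'M[C]_N,
        Uendo (VK N A) (VKi N A) (VE N A B Z) (VF N A B Z) T -> exists c, T = c%:M].
Proof.
move=> k_lt j_mod; have [b A_eq] := exprN_eq_qomega qxi_exprz_neq0 AN_ZN.
have Z_sqr : Z ^+ 2 = omega ^+ k.
  by rewrite qxi_exprz_sqr j_mod modz_small // ltz_nat ltnS ltnW.
have Z_neq0 := qxi_exprz_neq0.
exact: (V_nonsplit_extension A_neq0 B_neq0 Z_neq0 A_eq Z_sqr k_lt).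
Qed.

End HalfIntegerCharge.

Theorem theorem3p9 (R : realType) (N : nat) (hN : (2 <= N)%N) :
  (* general statement: mu = j/2 with j : int, Z = omega^mu = xi^j,
     A = omega^alpha, B = omega^beta, chi = (A^N, B^N, m) *)
  (forall (j : int) (A B : complex R),
     let xi := qxi R N in
     let Z := xi ^ j in
     let m := Z ^+ N in
     let a := A ^+ N in
     let b := B ^+ N in
     let K := VK N A in let Ki := VKi N A in
     let E := VE N A B Z in let F := VF N A B Z in
     a != 0 -> b != 0 ->
     \tr (psi a b m) = 2%:R * m ->
     (* (i) *)
     (~ diagonalizable (psi a b m) ->
        Usimple K Ki E F) /\
     (* (ii) *)
     (psi a b m = m%:M -> (j = - 1 %[mod (N : int)])%Z ->
        Usimple K Ki E F /\ Uprojective xi N K Ki E F) /\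
     (* (iii) *)
     (psi a b m = m%:M ->
      forall k : nat, (1 <= k <= N - 2)%N -> (j = k%:Z %[mod (N : int)])%Z ->
        [/\ Ureducible K Ki E F,
            Uindecomposable K Ki E F,
            exists W : 'M[complex R]_N, Usimple_sub K Ki E F W /\ \rank W = k.+1
          & forall T : 'M[complex R]_N, Uendo K Ki E F T -> exists c, T = c%:M])) /\
  (* the particular instance of (ii): a = m = -1, b = 1, mu = -1/2 *)
  (forall (A B : complex R), A ^+ N = -1 -> B ^+ N = 1 ->
     let xi := qxi R N in
     let Z := xi ^ (-1 : int) in
     Z ^+ N = -1 /\
     Usimple (VK N A) (VKi N A) (VE N A B Z) (VF N A B Z) /\
     Uprojective xi N (VK N A) (VKi N A) (VE N A B Z) (VF N A B Z)).
Proof.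
case: N hN => [//|n] /ltnSE n_gt0; split => [j A B xi Z m a b K Ki E F a_neq0 b_neq0 _|].
  have A_neq0 : A != 0 by move: a_neq0; rewrite /a expf_eq0.
  have B_neq0 : B != 0 by move: b_neq0; rewrite /b expf_eq0.
  have AN_ZN : psi a b m = m%:M -> A ^+ n.+1 = Z ^+ n.+1.
    by move/(congr1 (fun M : 'M_2 => M 0 0)); rewrite !mxE.
  split; [|split].
  - move=> nondiag; apply: Usimple_of_exprN_neq => //; apply/eqP => AZ; apply: nondiag.
    by rewrite psi_scalar ?qxi_exprz_exprN_sqr //; exact: diagonalizable_scalar.
  - by move=> /AN_ZN; exact: V_Usimple_Uprojective.
  - move=> /AN_ZN AZ k /andP[k_gt0 k_le]; apply: V_nonsplit_of_modz => //.
    by rewrite (leq_ltn_trans k_le) // subSS ltn_subrL.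
move=> A B AN BN xi Z.
have ZN : Z ^+ n.+1 = -1 by rewrite /Z /xi exprN1 exprVn qxi_exprN invrN1.
split=> //; apply: V_Usimple_Uprojective => //; last by rewrite AN ZN.
- by apply: contra_eq_neq AN => ->; rewrite expr0n /= eq_sym oppr_eq0 oner_eq0.
- by apply: contra_eq_neq BN => ->; rewrite expr0n /= eq_sym oner_eq0.
Qed.
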